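(* Let $\mathcal S$ be a Sawtooth model with $n$ upper particles, let $1\le r\le n+1$, and let $\mathcal X$ be an event of positive probability in the $\sigma$-algebra generated by all the particles other than $X_r$. Then the conditional density $x\mapsto d_{X_r\mid\mathcal X}(x)$ is (a version of) a nonincreasing function on $[0,1]$. Similarly, for $1\le r\le n$ and $\mathcal X$ an event of positive probability generated by the particles other than $Y_r$, $y\mapsto d_{Y_r\mid\mathcal X}(y)$ is nondecreasing.
   Context: A (type $--$) Sawtooth model with $n\ge1$ upper particles is specified by functions $f_1,g_1,\dots,f_n,g_n:[0,1]\to[0,\infty)$, each nondecreasing, $C^1$ and not identically zero. It is the probability space $[0,1]^{n+1}\times[0,1]^n$ with probability density at $(x_1,\dots,x_{n+1},y_1,\dots,y_n)$ equal to $\frac{1}{\mathcal V}\prod_{i=1}^n\mathbf 1_{\{x_i\le y_i\}}\mathbf 1_{\{x_{i+1}\le y_i\}}f_i(y_i-x_i)\,g_i(y_i-x_{i+1})$, $\mathcal V$ being the normalizing constant. The coordinates $X_1,\dots,X_{n+1}$ are the lower particles and $Y_1,\dots,Y_n$ the upper particles (ordered $X_1,Y_1,X_2,\dots,Y_n,X_{n+1}$); $X_I:=X_1$, $X_F:=X_{n+1}$. Conditional densities $d_{U\mid\cdot}$ and conditional cumulative distribution functions $F_{U\mid V=v}(t)=\mathbb P(U\le t\mid V=v)$ are those computed from the joint density. *)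

From HB Require Import structures.
From mathcomp Require Import all_boot all_order all_algebra.
From mathcomp Require Import all_classical all_reals all_analysis.
Set Implicit Arguments. Unset Strict Implicit. Unset Printing Implicit Defensive.
Import Order.TTheory GRing.Theory Num.Theory.
Import numFieldNormedType.Exports.
Local Open Scope classical_set_scope.
Local Open Scope ring_scope.

Section sawtooth.
Context {R : realType}.

(* iterated Lebesgue integral over the cube [0,1]^k, first coordinate outermost *)
Fixpoint cube_int (k : nat) : (k.-tuple R -> \bar R) -> \bar R :=
  match k return (k.-tuple R -> \bar R) -> \bar R with
  | 0 => fun F => F [tuple]
  | k'.+1 => fun F =>
      (\int[@lebesgue_measure R]_(x in `[0%R, 1%R]) cube_int (fun t => F [tuple of x :: t]))%E
  end.

Definition ins (k m : nat) (x : R) (z : k.-tuple R) : k.+1.-tuple R :=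
  [tuple nth 0 (take m z ++ x :: drop m z) j | j < k.+1].

Definition others (k m : nat) : 'I_k -> k.+1.-tuple R -> R :=
  fun j w => nth 0 w (bump m j).

Variables (n : nat) (f g : 'I_n -> R -> R).

(* sample point w = (X_1, Y_1, X_2, ..., Y_n, X_{n+1}) ; 0-indexed particles *)
Definition Xp (w : (2 * n).+1.-tuple R) (i : nat) : R := nth 0 w (2 * i).
Definition Yp (w : (2 * n).+1.-tuple R) (i : nat) : R := nth 0 w (2 * i).+1.

Definition udens (w : (2 * n).+1.-tuple R) : R :=
  \prod_(i < n) ((Xp w i <= Yp w i)%R%:R * (Xp w i.+1 <= Yp w i)%R%:R *
                 f i (Yp w i - Xp w i) * g i (Yp w i - Xp w i.+1)).

Definition normV : \bar R := cube_int (fun w => (udens w)%:E).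

Definition dens (w : (2 * n).+1.-tuple R) : R := udens w / fine normV.

Definition sprob (E : set ((2 * n).+1.-tuple R)) : \bar R :=
  cube_int (fun w => (\1_E w * dens w)%:E).

Definition cond_dens (m : nat) (E : set ((2 * n).+1.-tuple R)) (x : R) : \bar R :=
  (cube_int (fun z : (2 * n).-tuple R =>
     (\1_E (ins m x z) * dens (ins m x z))%:E) * (sprob E)^-1)%E.

End sawtooth.

Definition C1_on01 {R : realType} (h : R -> R) : Prop :=
  {within `[0%R, 1%R], continuous h} /\
  exists dh : R -> R, {within `[0%R, 1%R], continuous dh} /\
    forall t : R, 0 < t < 1 -> is_derive t 1 h (dh t).

Definition sawtooth_fun {R : realType} (h : R -> R) : Prop :=
  (forall t : R, 0 <= t <= 1 -> 0 <= h t) /\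
  (forall s t : R, 0 <= s -> s <= t -> t <= 1 -> h s <= h t) /\
  C1_on01 h /\
  (exists t : R, 0 <= t <= 1 /\ h t != 0).

From HB Require Import structures.
From mathcomp Require Import all_boot all_order all_algebra.
From mathcomp Require Import all_classical all_reals all_analysis.
From mathcomp Require Import lra zify.
Import Order.TTheory GRing.Theory Num.Theory.
Import numFieldNormedType.Exports.
Local Open Scope classical_set_scope.
Local Open Scope ring_scope.

(* Freeze every particle but the one at position m.  Since E lies in the
   sigma-algebra of the other particles, its indicator does not depend on the
   free coordinate.  The unnormalised density is a product of factors
   1{X_i <= Y_i} 1{X_(i+1) <= Y_i} f_i(Y_i - X_i) g_i(Y_i - X_(i+1)); as the
   f_i, g_i are nonnegative and nondecreasing, every factor is nonincreasing
   in each lower particle and nondecreasing in each upper particle.  So the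
   integrand defining the conditional density is pointwise monotone in the
   free coordinate, hence so is its integral over the remaining coordinates,
   and the conditional density is monotone everywhere on [0,1]. *)

(* Unlike [ge0_le_integral], no measurability is required: the integral of a
   nonnegative function is a supremum over the simple functions below it.
   This is why no measurability of the iterated integrands is ever needed. *)
Lemma ge0_le_integral_nonmeasurable d (T : measurableType d) (R : realType)
    (mu : {measure set T -> \bar R}) (D : set T) (f1 f2 : T -> \bar R) :
  (forall x, D x -> (0 <= f1 x)%E) -> (forall x, D x -> (f1 x <= f2 x)%E) ->
  (\int[mu]_(x in D) f1 x <= \int[mu]_(x in D) f2 x)%E.
Proof.
move=> f10 f12.
have f20 x : D x -> (0 <= f2 x)%E by move=> Dx; exact: le_trans (f10 _ Dx) (f12 _ Dx).
rewrite [leLHS]ge0_integralE // [leRHS]ge0_integralE //.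
apply: ereal_sup_le => _ [h hf <-]; exists h => // x.
apply: le_trans (hf x) _; rewrite /patch; case: ifP => // /set_mem Dx.
exact: f12.
Qed.

Section cube_int.
Context {R : realType}.
Local Notation mu := (@lebesgue_measure R).

Definition incube {k} (t : k.-tuple R) := forall j, 0 <= nth 0 t j <= 1.

Lemma incube_nil : incube ([tuple] : 0.-tuple R).
Proof. by move=> j; rewrite nth_nil lexx ler01. Qed.

Lemma incube_cons k (x : R) (t : k.-tuple R) : 0 <= x <= 1 -> incube t ->
  incube [tuple of x :: t].
Proof. by move=> hx ht [|j] //=; apply: ht. Qed.

Lemma cube_int_ge0 k (F : k.-tuple R -> \bar R) :
  (forall t, incube t -> (0 <= F t)%E) -> (0 <= cube_int F)%E.
Proof.
elim: k F => [|k IH] F F0 /=; first exact/F0/incube_nil.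
apply: integral_ge0 => x; rewrite /= in_itv => hx.
by apply: IH => t ht; apply/F0/incube_cons.
Qed.

Lemma le_cube_int k (F G : k.-tuple R -> \bar R) :
  (forall t, incube t -> (0 <= F t)%E) ->
  (forall t, incube t -> (F t <= G t)%E) -> (cube_int F <= cube_int G)%E.
Proof.
elim: k F G => [|k IH] F G F0 FG /=; first exact/FG/incube_nil.
apply: ge0_le_integral_nonmeasurable => x; rewrite /= in_itv => hx.
  by apply: cube_int_ge0 => t ht; apply/F0/incube_cons.
by apply: IH => t ht; [apply/F0/incube_cons|apply/FG/incube_cons].
Qed.

Lemma cube_int_cst k (B : \bar R) : cube_int (fun _ : k.-tuple R => B) = B.
Proof.
elim: k => [|k IH] //=; rewrite IH.
by rewrite (integral_cst mu) //= lebesgue_measure_itv /= lte_fin ltr01 oppr0 adde0 mule1.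
Qed.

Lemma cube_int_le_cst k (F : k.-tuple R -> \bar R) (B : \bar R) :
  (forall t, incube t -> (0 <= F t)%E) ->
  (forall t, incube t -> (F t <= B)%E) -> (cube_int F <= B)%E.
Proof. by move=> F0 FB; rewrite -(cube_int_cst k B); apply: le_cube_int. Qed.

End cube_int.

Lemma g_sigma_preimage_saturated {d} {rT : semiRingOfSetsType d} {aT : Type} {k}
    {h : 'I_k -> aT -> rT} {E : set aT} :
  g_sigma_preimage h E ->
  forall w w', (forall j, h j w = h j w') -> (E w <-> E w').
Proof.
pose S := [set A : set aT | forall w w', (forall j, h j w = h j w') -> (A w <-> A w')].
suff : g_sigma_preimage h `<=` S by move=> hS hE; exact: hS.
apply: smallest_sub.
  split.
  - by move=> w w' _.
  - move=> A SA w w' hw; have [h1 h2] := SA w w' hw.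
    by split=> -[_ hA]; split=> // hA'; apply: hA; [apply: h2|apply: h1].
  - by move=> A SA w w' hw; split=> -[i _ Ai]; exists i => //; apply/(SA i w w' hw).
apply: (big_ind (fun X => X `<=` S)) => //.
- by move=> X Y hX hY A [hA|hA]; [exact: hX|exact: hY].
- by move=> i _ A [B _ <-] w w' hw; rewrite /preimage /= hw.
Qed.

Section insertion.
Context {R : realType} {k m : nat}.
Hypothesis mk : (m <= k)%N.

Lemma nth_ins_cat (x : R) (z : k.-tuple R) j :
  nth 0 (ins m x z) j = if (j < k.+1)%N then nth 0 (take m z ++ x :: drop m z) j else 0.
Proof.
case: ltnP => hj; first by rewrite -[j]/(nat_of_ord (Ordinal hj)) nth_mktuple.
by rewrite nth_default // size_tuple.
Qed.

Lemma size_take_ins (z : k.-tuple R) : size (take m z) = m.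
Proof. by rewrite size_takel // size_tuple. Qed.

Lemma nth_ins (x : R) (z : k.-tuple R) j :
  nth 0 (ins m x z) j = if j == m then x else nth 0 (ins m 0 z) j.
Proof.
rewrite !nth_ins_cat; have [->|jm] := eqVneq j m.
  by rewrite ltnS mk nth_cat size_take_ins ltnn subnn.
case: ltnP => // _; rewrite !nth_cat size_take_ins; case: ltnP => // hmj.
have : (0 < j - m)%N by rewrite subn_gt0 ltn_neqAle eq_sym jm hmj.
by case: (j - m)%N.
Qed.

Lemma nth_ins_neq (a b : R) (z : k.-tuple R) j : j != m ->
  nth 0 (ins m a z) j = nth 0 (ins m b z) j.
Proof. by move=> jm; rewrite nth_ins [RHS]nth_ins (negbTE jm). Qed.

Lemma nth_ins_le (x x' : R) (z : k.-tuple R) j : x <= x' ->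
  nth 0 (ins m x z) j <= nth 0 (ins m x' z) j.
Proof. by move=> xx; rewrite nth_ins [leRHS]nth_ins; case: (j == m). Qed.

Lemma others_ins (x y : R) (z : k.-tuple R) j :
  others m j (ins m x z) = others m j (ins m y z).
Proof. by apply: nth_ins_neq; rewrite eq_sym neq_bump. Qed.

Lemma incube_ins (x : R) (z : k.-tuple R) :
  0 <= x <= 1 -> incube z -> incube (ins m x z).
Proof.
move=> hx hz j; rewrite nth_ins_cat; case: ltnP => _; last by rewrite lexx ler01.
rewrite nth_cat size_take_ins; case: ltnP => hjm; first by rewrite nth_take //; apply: hz.
by case: (j - m)%N => [|i] //=; rewrite nth_drop; apply: hz.
Qed.

End insertion.

Section saw_factor.
Context {R : realType} (fi gi : R -> R).
Hypotheses (fi_ge0 : forall t : R, 0 <= t <= 1 -> 0 <= fi t)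
  (fi_homo : forall s t : R, 0 <= s -> s <= t -> t <= 1 -> fi s <= fi t)
  (gi_ge0 : forall t : R, 0 <= t <= 1 -> 0 <= gi t)
  (gi_homo : forall s t : R, 0 <= s -> s <= t -> t <= 1 -> gi s <= gi t).

Definition saw_factor (a b c : R) :=
  (a <= b)%R%:R * (c <= b)%R%:R * fi (b - a) * gi (b - c).

Definition in01 (x : R) := 0 <= x <= 1.

Lemma saw_factor_ge0 a b c : in01 a -> in01 b -> in01 c -> 0 <= saw_factor a b c.
Proof.
rewrite /in01 /saw_factor => /andP[a0 a1] /andP[b0 b1] /andP[c0 c1].
have [hab|hab] := leP a b; have [hcb|hcb] := leP c b; rewrite /= ?(mulr0, mul0r) //.
by rewrite !mul1r; apply: mulr_ge0; [apply: fi_ge0|apply: gi_ge0]; apply/andP; split; lra.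
Qed.

Lemma le_saw_factor a b c a' b' c' :
  in01 a -> in01 b -> in01 c -> in01 a' -> in01 b' -> in01 c' ->
  a' <= a -> b <= b' -> c' <= c -> saw_factor a b c <= saw_factor a' b' c'.
Proof.
move=> ha hb hc ha' hb' hc' aa bb cc.
have := @saw_factor_ge0 a' b' c' ha' hb' hc'; move: ha hb hc ha' hb' hc'.
rewrite /in01 /saw_factor => /andP[? ?] /andP[? ?] /andP[? ?] /andP[? ?] /andP[? ?] /andP[? ?].
have [hab|hab] := leP a b; have [hcb|hcb] := leP c b; rewrite /= ?(mulr0, mul0r) //.
have -> : (a' <= b') = true by apply/idP; lra.
have -> : (c' <= b') = true by apply/idP; lra.
move=> _; rewrite !mul1r; apply: ler_pM.
- by apply: fi_ge0; apply/andP; split; lra.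
- by apply: gi_ge0; apply/andP; split; lra.
- by apply: fi_homo; lra.
- by apply: gi_homo; lra.
Qed.

Lemma saw_factor_le a b c : in01 a -> in01 b -> in01 c ->
  saw_factor a b c <= fi 1 * gi 1.
Proof.
move=> ha hb hc; have h0 : in01 0 by rewrite /in01 lexx ler01.
have h1 : in01 1 by rewrite /in01 lexx ler01.
have := @le_saw_factor a b c 0 1 0 ha hb hc h0 h1 h0; rewrite /saw_factor !subr0 !ler01 !mul1r.
by apply; [case/andP: ha|case/andP: hb|case/andP: hc].
Qed.

End saw_factor.

Section sawtooth_density.
Context {R : realType} {n : nat} {f g : 'I_n -> R -> R}.
Hypotheses (f_ge0 : forall i (t : R), 0 <= t <= 1 -> 0 <= f i t)
  (f_homo : forall i (s t : R), 0 <= s -> s <= t -> t <= 1 -> f i s <= f i t)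
  (g_ge0 : forall i (t : R), 0 <= t <= 1 -> 0 <= g i t)
  (g_homo : forall i (s t : R), 0 <= s -> s <= t -> t <= 1 -> g i s <= g i t).

Local Notation tup := ((2 * n).+1.-tuple R).

Lemma udensE (w : tup) :
  udens f g w = \prod_(i < n) saw_factor (f i) (g i) (Xp w i) (Yp w i) (Xp w i.+1).
Proof. by []. Qed.

Lemma udens_ge0 (w : tup) : incube w -> 0 <= udens f g w.
Proof.
move=> hw; rewrite udensE; apply: prodr_ge0 => i _.
exact: saw_factor_ge0 (f i) (g i) (f_ge0 i) (g_ge0 i) _ _ _ (hw _) (hw _) (hw _).
Qed.

Lemma udens_le (w : tup) : incube w -> udens f g w <= \prod_(i < n) (f i 1 * g i 1).
Proof.
move=> hw; rewrite udensE; apply: ler_prod => i _; apply/andP; split.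
  exact: saw_factor_ge0 (f i) (g i) (f_ge0 i) (g_ge0 i) _ _ _ (hw _) (hw _) (hw _).
exact: saw_factor_le (f i) (g i) (f_ge0 i) (f_homo i) (g_ge0 i) (g_homo i) _ _ _ (hw _) (hw _) (hw _).
Qed.

Lemma le_udens_ins (m : nat) (x y : R) (z : (2 * n).-tuple R) :
  (m <= 2 * n)%N -> 0 <= x <= 1 -> 0 <= y <= 1 -> incube z ->
  (forall i : 'I_n, [/\ Xp (ins m y z) i <= Xp (ins m x z) i,
     Yp (ins m x z) i <= Yp (ins m y z) i &
     Xp (ins m y z) i.+1 <= Xp (ins m x z) i.+1]) ->
  udens f g (ins m x z) <= udens f g (ins m y z).
Proof.
move=> mk hx hy hz hXY; have hw := incube_ins mk x z hx hz; have hw' := incube_ins mk y z hy hz.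
rewrite !udensE; apply: ler_prod => i _; apply/andP; split.
  exact: saw_factor_ge0 (f i) (g i) (f_ge0 i) (g_ge0 i) _ _ _ (hw _) (hw _) (hw _).
have [hX hY hX1] := hXY i.
exact: le_saw_factor (f i) (g i) (f_ge0 i) (f_homo i) (g_ge0 i) (g_homo i) _ _ _ _ _ _
  (hw _) (hw _) (hw _) (hw' _) (hw' _) (hw' _) hX hY hX1.
Qed.

Lemma le_udens_lower (r : nat) (x y : R) (z : (2 * n).-tuple R) :
  (r <= n)%N -> 0 <= x -> x <= y -> y <= 1 -> incube z ->
  udens f g (ins (2 * r) y z) <= udens f g (ins (2 * r) x z).
Proof.
move=> rn x0 xy y1 hz; have mk : (2 * r <= 2 * n)%N by lia.
apply: le_udens_ins => // [||i]; try by apply/andP; split; lra.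
split; rewrite /Xp /Yp; try exact: nth_ins_le.
by rewrite (nth_ins_neq mk y x); last by apply/eqP; lia.
Qed.

Lemma le_udens_upper (r : nat) (x y : R) (z : (2 * n).-tuple R) :
  (r < n)%N -> 0 <= x -> x <= y -> y <= 1 -> incube z ->
  udens f g (ins (2 * r).+1 x z) <= udens f g (ins (2 * r).+1 y z).
Proof.
move=> rn x0 xy y1 hz; have mk : ((2 * r).+1 <= 2 * n)%N by lia.
apply: le_udens_ins => // [||i]; try by apply/andP; split; lra.
split; rewrite /Xp /Yp; try exact: nth_ins_le;
  by rewrite (nth_ins_neq mk y x); last by apply/eqP; lia.
Qed.

Lemma fine_normV_ge0 : 0 <= fine (normV f g).
Proof. by apply/fine_ge0/cube_int_ge0 => t ht; rewrite lee_fin; apply: udens_ge0. Qed.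

Lemma dens_ge0 (w : tup) : incube w -> 0 <= dens f g w.
Proof. by move=> hw; apply: divr_ge0; [exact: udens_ge0|exact: fine_normV_ge0]. Qed.

Lemma dens_le (w : tup) : incube w ->
  dens f g w <= (\prod_(i < n) (f i 1 * g i 1)) / fine (normV f g).
Proof.
by move=> hw; apply: ler_wpM2r; [rewrite invr_ge0 fine_normV_ge0|exact: udens_le].
Qed.

Context {E : set tup}.

Definition slice_int (m : nat) (x : R) : \bar R :=
  cube_int (fun z : (2 * n).-tuple R => (\1_E (ins m x z) * dens f g (ins m x z))%:E).

Lemma cond_densE m x : cond_dens f g m E x = (slice_int m x * (sprob f g E)^-1)%E.
Proof. by []. Qed.

Context {m : nat}.
Hypotheses (mk : (m <= 2 * n)%N) (hE : g_sigma_preimage (@others R (2 * n) m) E).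

Lemma indic_ins (x y : R) (z : (2 * n).-tuple R) :
  \1_E (ins m x z) = \1_E (ins m y z) :> R.
Proof.
have hxy := g_sigma_preimage_saturated hE _ _ (others_ins mk x y z).
by rewrite /indic; do 2 apply: congr1; apply/idP/idP => /set_mem/hxy/mem_set.
Qed.

Lemma indic_dens_ins_ge0 x z : 0 <= x <= 1 -> incube z ->
  0 <= \1_E (ins m x z) * dens f g (ins m x z).
Proof. by move=> hx hz; apply: mulr_ge0; [rewrite /indic ler0n|apply/dens_ge0/incube_ins]. Qed.

Lemma slice_int_ge0 x : 0 <= x <= 1 -> (0 <= slice_int m x)%E.
Proof. by move=> hx; apply: cube_int_ge0 => z hz; rewrite lee_fin indic_dens_ins_ge0. Qed.

Lemma slice_int_fin_num x : 0 <= x <= 1 -> slice_int m x \is a fin_num.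
Proof.
move=> hx; rewrite ge0_fin_numE ?slice_int_ge0 //.
apply: le_lt_trans (ltry ((\prod_(i < n) (f i 1 * g i 1)) / fine (normV f g))).
apply: cube_int_le_cst => z hz; rewrite lee_fin ?indic_dens_ins_ge0 //.
have hw := incube_ins mk x z hx hz.
apply: le_trans (dens_le _ hw); rewrite -[leRHS]mul1r.
by apply: ler_wpM2r; [exact: dens_ge0|rewrite /indic; case: (_ \in _)].
Qed.

Lemma le_slice_int x y : 0 <= x <= 1 -> 0 <= y <= 1 ->
  (forall z, incube z -> udens f g (ins m x z) <= udens f g (ins m y z)) ->
  (slice_int m x <= slice_int m y)%E.
Proof.
move=> hx hy hxy; apply: le_cube_int => z hz; rewrite lee_fin ?indic_dens_ins_ge0 //.
rewrite (indic_ins x y); apply: ler_wpM2l; first by rewrite /indic ler0n.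
by apply: ler_wpM2r; [rewrite invr_ge0 fine_normV_ge0|exact: hxy].
Qed.

Lemma cond_dens_monotone_version : (0 < sprob f g E)%E ->
  exists2 h : R -> R,
    (forall x y, 0 <= x <= 1 -> 0 <= y <= 1 ->
      (forall z, incube z -> udens f g (ins m x z) <= udens f g (ins m y z)) ->
      h x <= h y)
  & (forall x, 0 <= x <= 1 -> cond_dens f g m E x = (h x)%:E).
Proof.
move=> hpos.
have inv_fin : ((sprob f g E)^-1)%E \is a fin_num.
  by rewrite fin_numV ?(gt_eqF hpos) ?(gt_eqF (lt_trans (ltNyr 0) hpos)).
have c_ge0 : 0 <= fine ((sprob f g E)^-1)%E by apply/fine_ge0; rewrite inve_ge0 ltW.
exists (fun x => fine (slice_int m x) * fine ((sprob f g E)^-1)%E).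
  move=> x y hx hy hxy; apply: ler_wpM2r => //.
  by apply: fine_le; [exact: slice_int_fin_num|exact: slice_int_fin_num|exact: le_slice_int].
by move=> x hx; rewrite cond_densE EFinM !fineK ?slice_int_fin_num.
Qed.

End sawtooth_density.

Theorem mainTheorem4 (R : realType) (n : nat) (f g : 'I_n -> R -> R)
  (hn : (0 < n)%N)
  (hf : forall i, sawtooth_fun (f i)) (hg : forall i, sawtooth_fun (g i)) :
  (forall (r : 'I_n.+1) (E : set ((2 * n).+1.-tuple R)),
      g_sigma_preimage (@others R (2 * n) (2 * r)) E ->
      (0 < sprob f g E)%E ->
      exists h : R -> R,
        (forall x y : R, 0 <= x -> x <= y -> y <= 1 -> h y <= h x) /\
        {ae @lebesgue_measure R, forall x : R, 0 <= x <= 1 ->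
            cond_dens f g (2 * r) E x = (h x)%:E})
  /\
  (forall (r : 'I_n) (E : set ((2 * n).+1.-tuple R)),
      g_sigma_preimage (@others R (2 * n) (2 * r).+1) E ->
      (0 < sprob f g E)%E ->
      exists h : R -> R,
        (forall x y : R, 0 <= x -> x <= y -> y <= 1 -> h x <= h y) /\
        {ae @lebesgue_measure R, forall y : R, 0 <= y <= 1 ->
            cond_dens f g (2 * r).+1 E y = (h y)%:E}).
Proof.
have f_ge0 i := (hf i).1; have f_homo i := (hf i).2.1.
have g_ge0 i := (hg i).1; have g_homo i := (hg i).2.1.
have bounds01 (x y : R) : 0 <= x -> x <= y -> y <= 1 -> 0 <= x <= 1 /\ 0 <= y <= 1.
  by move=> x0 xy y1; split; apply/andP; split; lra.
split=> r E hE hpos.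
- have mk : (2 * r <= 2 * n)%N by have := ltn_ord r; lia.
  have [h h_mono hh] := cond_dens_monotone_version f_ge0 f_homo g_ge0 g_homo mk hE hpos.
  exists h; split; last exact: aeW.
  move=> x y x0 xy y1; have [hx hy] := bounds01 x y x0 xy y1.
  by apply: h_mono => // z hz; apply: le_udens_lower => //; have := ltn_ord r; lia.
- have mk : ((2 * r).+1 <= 2 * n)%N by have := ltn_ord r; lia.
  have [h h_mono hh] := cond_dens_monotone_version f_ge0 f_homo g_ge0 g_homo mk hE hpos.
  exists h; split; last exact: aeW.
  move=> x y x0 xy y1; have [hx hy] := bounds01 x y x0 xy y1.
  by apply: h_mono => // z hz; apply: le_udens_upper.
Qed.
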